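(* Let $R$ be a commutative ring with identity and $S$ a multiplicative subset of $R$. Let $M$ and $N$ be $R$-modules and suppose $f:M\rightarrow N$ is a $u$-$S$-isomorphism. Then there exist a $u$-$S$-isomorphism $g:N\rightarrow M$ and an element $t\in S$ such that $f\circ g=t\,\mathrm{Id}_N$ and $g\circ f=t\,\mathrm{Id}_M$.
   Context: A multiplicative subset $S$ of $R$ satisfies $1\in S$ and $s_1s_2\in S$ for $s_1,s_2\in S$. An $R$-module $T$ is $u$-$S$-torsion (with respect to $s$) if there is $s\in S$ with $sT=0$. A sequence $A\xrightarrow{f}B\xrightarrow{g}C$ is $u$-$S$-exact at $B$ (with respect to $s\in S$) if $s\,\mathrm{Ker}(g)\subseteq \mathrm{Im}(f)$ and $s\,\mathrm{Im}(f)\subseteq\mathrm{Ker}(g)$. An $R$-homomorphism $f:M\to N$ is a $u$-$S$-isomorphism if $0\to M\xrightarrow{f}N\to 0$ is $u$-$S$-exact, i.e. there is $s\in S$ with $s\,\mathrm{Ker}(f)=0$ and $sN\subseteq \mathrm{Im}(f)$. *)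

From HB Require Import structures.
From mathcomp Require Import all_boot all_algebra.
Set Implicit Arguments. Unset Strict Implicit. Unset Printing Implicit Defensive.
Import GRing.Theory.
Local Open Scope ring_scope.

Definition mult_subset (R : comPzRingType) (S : R -> Prop) : Prop :=
  S 1 /\ (forall s1 s2, S s1 -> S s2 -> S (s1 * s2)).

Definition u_S_iso (R : comPzRingType) (S : R -> Prop)
  (M N : lmodType R) (f : M -> N) : Prop :=
  exists s, S s /\ (forall m : M, f m = 0 -> s *: m = 0)
              /\ (forall n : N, exists m : M, f m = s *: n).

(* Pick for every n a preimage p(n) of s n under f.  The choice p is not
   linear, but two preimages of the same vector differ by an element of
   Ker f, which s annihilates; so g := s p is linear, and f o g and g o f are
   both multiplication by s^2. *)

From HB Require Import structures.
From mathcomp Require Import all_boot all_algebra.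
Local Open Scope ring_scope.
Import GRing.Theory.

Lemma u_S_iso_of_scaled_inverse (R : comPzRingType) (S : R -> Prop)
    (M N : lmodType R) (f : {linear M -> N}) (g : {linear N -> M}) (t : R) :
  S t -> (forall n, f (g n) = t *: n) -> (forall m, g (f m) = t *: m) ->
  u_S_iso S g.
Proof.
move=> St fgE gfE; exists t; split=> //; split=> [n gn0|m].
  by rewrite -fgE gn0 linear0.
by exists (f m).
Qed.

Section ScaledInverse.
Set Implicit Arguments.
Unset Strict Implicit.
Variables (R : comPzRingType) (M N : lmodType R) (f : {linear M -> N}) (s : R).
Hypothesis s_ker : forall m : M, f m = 0 -> s *: m = 0.
Hypothesis s_im : forall n : N, exists m : M, f m = s *: n.

Lemma scale_eq_of_image_eq (m m' : M) : f m = f m' -> s *: m = s *: m'.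
Proof.
move=> fmm'; apply/eqP; rewrite -subr_eq0 -scalerBr; apply/eqP/s_ker.
by rewrite linearB fmm' subrr.
Qed.

Lemma exists_scaled_preimage (n : N) : exists m : M, f m == s *: n.
Proof. by have [m fm] := s_im n; exists m; apply/eqP. Qed.

Definition scaled_preimage (n : N) : M := xchoose (exists_scaled_preimage n).

Lemma scaled_preimageP (n : N) : f (scaled_preimage n) = s *: n.
Proof. exact/eqP/(xchooseP (exists_scaled_preimage n)). Qed.

Definition scaled_inverse_fun (n : N) : M := s *: scaled_preimage n.

Lemma scaled_inverse_is_linear : linear scaled_inverse_fun.
Proof.
move=> a x y; rewrite /scaled_inverse_fun.
have -> : s *: scaled_preimage (a *: x + y)
          = s *: (a *: scaled_preimage x + scaled_preimage y).
  apply: scale_eq_of_image_eq.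
  by rewrite linearP !scaled_preimageP scalerDr !scalerA mulrC.
by rewrite scalerDr !scalerA mulrC.
Qed.

HB.instance Definition _ :=
  GRing.isLinear.Build R N M _ scaled_inverse_fun scaled_inverse_is_linear.

Definition scaled_inverse : {linear N -> M} := scaled_inverse_fun.

Lemma comp_scaled_inverse (n : N) : f (scaled_inverse n) = (s * s) *: n.
Proof. by rewrite linearZ /= scaled_preimageP scalerA. Qed.

Lemma scaled_inverse_comp (m : M) : scaled_inverse (f m) = (s * s) *: m.
Proof.
rewrite /= /scaled_inverse_fun -scalerA; apply: scale_eq_of_image_eq.
by rewrite scaled_preimageP linearZ.
Qed.

End ScaledInverse.

Theorem proposition1p1 (R : comPzRingType) (S : R -> Prop)
  (M N : lmodType R) (f : {linear M -> N}) :
  mult_subset S -> u_S_iso S f ->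
  exists g : {linear N -> M},
    u_S_iso S g /\
    exists t, S t /\ (forall n : N, f (g n) = t *: n)
                  /\ (forall m : M, g (f m) = t *: m).
Proof.
move=> [_ S_mul] [s [Ss [s_ker s_im]]].
have Sss : S (s * s) by exact: S_mul.
have fgE := comp_scaled_inverse s_ker s_im.
have gfE := scaled_inverse_comp s_ker s_im.
exists (scaled_inverse s_ker s_im); split; first exact: u_S_iso_of_scaled_inverse Sss fgE gfE.
by exists (s * s).
Qed.
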